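(* Let $A\in\mathbb{R}^{m\times n}$ have no zero row, with rows $a_1^T,\dots,a_m^T$, let $\mu_1,\dots,\mu_m\in\mathbb{R}$ be arbitrary, ${\bf u}=(\mu_1,\dots,\mu_m)$, and $h_{k,l}=a_k^Ta_l/\|a_l\|_2^2$. For $1\le i<j\le m$ let $$d_{i,j}({\bf u}_i)=\sum_{v=2}^{j-i+1}(-1)^{v-1}\sum_{i=t_1<t_2<\dots<t_v=j}\ \prod_{s=1}^{v-1}\mu_{t_{s+1}}\prod_{s=1}^{v-1}h_{t_s,t_{s+1}},$$ and let $\Omega({\bf u})\in\mathbb{R}^{m\times m}$ be the unit upper triangular matrix with $(i,j)$ entry $d_{i,j}({\bf u}_i)$ for $j>i$. For $j\neq i$ and $c\in\mathbb{R}$ let $E(j,i(c))=I_m+c\,e_je_i^T$ (the identity with entry $c$ at position $(j,i)$). Define $H_1(\mu_1)=I_m$ and $H_i(\mu_i)=\prod_{j=1}^{i-1}E\big(j,i(-\mu_ih_{j,i})\big)$ for $1<i\le m$. Then $$\Omega({\bf u})=H_1(\mu_1)H_2(\mu_2)\cdots H_m(\mu_m).$$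
   Context: $e_k$ denotes the $k$-th standard basis vector of $\mathbb{R}^m$ and $I_m$ the $m\times m$ identity. *)

From HB Require Import structures.
From mathcomp Require Import all_boot all_order all_algebra.
From mathcomp Require Import reals.
Set Implicit Arguments. Unset Strict Implicit. Unset Printing Implicit Defensive.
Import Order.TTheory GRing.Theory Num.Theory.
Local Open Scope ring_scope.

Section Defs.
Variables (R : realType) (m n : nat).
Implicit Types (A : 'M[R]_(m, n)) (mu : 'I_m -> R).

Definition rownorm2 A (l : 'I_m) : R := \sum_(p < n) A l p ^+ 2.

Definition hcoef A (k l : 'I_m) : R := (\sum_(p < n) A k p * A l p) / rownorm2 A l.

(* t is a chain i = t_1 < t_2 < ... < t_v = j (0-based positions in the tuple) *)
Definition is_chain (i j : 'I_m) v (t : v.-tuple 'I_m) : bool :=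
  [&& sorted (fun a b : 'I_m => (a < b)%N) t,
      nth i t 0 == i & nth i t v.-1 == j].

Definition dcoef A mu (i j : 'I_m) : R :=
  \sum_(2 <= v < (j - i).+2)
    \sum_(t : v.-tuple 'I_m | is_chain i j t)
      (-1) ^+ v.-1 *
      (\prod_(0 <= s < v.-1) mu (nth i t s.+1)) *
      (\prod_(0 <= s < v.-1) hcoef A (nth i t s) (nth i t s.+1)).

Definition Omega A mu : 'M[R]_m :=
  \matrix_(i, j) (if i == j then 1 else if (i < j)%N then dcoef A mu i j else 0).

Definition Eel (j i : 'I_m) (c : R) : 'M[R]_m := 1%:M + c *: delta_mx j i.

Definition oprod (s : seq 'I_m) (M : 'I_m -> 'M[R]_m) : 'M[R]_m :=
  foldr (fun x acc => M x *m acc) 1%:M s.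

Definition Hmat A mu (i : 'I_m) : 'M[R]_m :=
  if (i == 0 :> nat) then 1%:M
  else oprod [seq j : 'I_m <- enum 'I_m | (val j < val i)%N]
              (fun j => Eel j i (- mu i * hcoef A j i)).

End Defs.

(* Let N be the strictly upper triangular matrix with N_{k,l} = -mu_l h_{k,l}
   for k < l.  Its v-th power sums the products of N along all chains
   i = t_1 < ... < t_{v+1} = j, so d_{i,j} is the sum of the entries (N^v)_{i,j},
   v >= 1, and since N is nilpotent, Omega = I + N + ... + N^(m-1) = (I - N)^-1.
   On the other hand H_l = I + C_l, where C_l keeps only column l of N; as
   C_l C_k = 0 for k <= l, the product (I + C_1) ... (I + C_m) is also a left
   inverse of I - N = I - (C_1 + ... + C_m). *)

From HB Require Import structures.
From mathcomp Require Import all_boot all_order all_algebra.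
From mathcomp Require Import reals.
From mathcomp Require Import zify.
Set Implicit Arguments. Unset Strict Implicit. Unset Printing Implicit Defensive.
Import Order.TTheory GRing.Theory Num.Theory.
Local Open Scope ring_scope.

Lemma big_tuple_cons (R : Type) (idx : R) (op : Monoid.com_law idx)
    (T : finType) v (P : pred (v.+1.-tuple T)) (F : v.+1.-tuple T -> R) :
  \big[op/idx]_(t | P t) F t =
  \big[op/idx]_(x : T) \big[op/idx]_(t : v.-tuple T | P [tuple of x :: t])
     F [tuple of x :: t].
Proof.
rewrite pair_big_dep /=.
rewrite (reindex (fun p : T * v.-tuple T => [tuple of p.1 :: p.2])) /=; last first.
  exists (fun t : v.+1.-tuple T => (thead t, behead_tuple t)).
    by move=> [x t] _ /=; congr pair; apply: val_inj.
  by move=> t _; rewrite [RHS]tuple_eta; apply: val_inj.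
by apply: eq_bigl => -[x t].
Qed.

Lemma is_chain_thead m v (i j : 'I_m) (t : v.+1.-tuple 'I_m) :
  is_chain i j t = (i == thead t) && is_chain (thead t) j t.
Proof.
case: t => [[|x s] //= Hs].
rewrite /is_chain /thead (tnth_nth x) /=.
have Hv : (v < size (x :: s))%N by rewrite -(eqP Hs).
rewrite (set_nth_default x i Hv) eqxx (eq_sym i x).
by case: (x == i); rewrite ?andbF ?andbT.
Qed.

Lemma is_chain_cons m v (i j : 'I_m) (t : v.+1.-tuple 'I_m) :
  is_chain i j [tuple of i :: t] = (i < thead t)%N && is_chain (thead t) j t.
Proof.
case: t => [[|x s] //= Hs].
rewrite /is_chain /thead (tnth_nth x) /=.
have Hv : (v < size (x :: s))%N by rewrite -(eqP Hs).
by rewrite (set_nth_default x i Hv) !eqxx /= andbA.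
Qed.

Lemma prod_1D_pairwise_mul0 (R : pzSemiRingType) (I : eqType) (a : I -> R) (s : seq I) :
  pairwise (fun x y => a x * a y == 0) s ->
  \prod_(x <- s) (1 + a x) = 1 + \sum_(x <- s) a x.
Proof.
elim: s => [|x s IH]; first by rewrite !big_nil addr0.
rewrite pairwise_cons => /andP[/allP ax0 /IH {}IH].
have axS : a x * \sum_(y <- s) a y = 0.
  by rewrite mulr_sumr big1_seq // => y /andP[_ /ax0 /eqP].
by rewrite !big_cons IH mulrDl mul1r mulrDr mulr1 axS addr0 addrAC -addrA.
Qed.

Lemma prod_1D_mul_1B_sum (R : pzRingType) (I : eqType) (c : I -> R) (s : seq I) :
  pairwise (fun x y => c y * c x == 0) s -> all (fun x => c x * c x == 0) s ->
  \prod_(x <- s) (1 + c x) * (1 - \sum_(x <- s) c x) = 1.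
Proof.
elim: s => [|x s IH]; first by rewrite !big_nil subr0 mulr1.
rewrite pairwise_cons /= => /andP[/allP cx0 pair_s] /andP[/eqP cxx all_s].
have Scx : (\sum_(y <- s) c y) * c x = 0.
  by rewrite mulr_suml big1_seq // => y /andP[_ /cx0 /eqP].
have -> : 1 - \sum_(y <- x :: s) c y = (1 - \sum_(y <- s) c y) * (1 - c x).
  by rewrite big_cons mulrBr mulr1 mulrBl mul1r Scx subr0 opprD addrA addrAC.
rewrite big_cons -!mulrA (mulrA (\prod_(y <- s) _)) IH // mul1r.
by rewrite mulrBr mulr1 mulrDl mul1r cxx addr0 addrK.
Qed.

Definition colpart (R : nmodType) p q (A : 'M[R]_(p, q)) (x : 'I_q) : 'M[R]_(p, q) :=
  \matrix_(k, l) if l == x then A k l else 0.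

Lemma sum_colpart (R : nmodType) p q (A : 'M[R]_(p, q)) : \sum_x colpart A x = A.
Proof.
apply/matrixP => k l; rewrite summxE (bigD1 l) //= big1 => [|x xl]; rewrite mxE.
  by rewrite eqxx addr0.
by rewrite eq_sym (negbTE xl).
Qed.

Lemma pairwise_ltn_enum_ord m : pairwise (fun i j : 'I_m => (i < j)%N) (enum 'I_m).
Proof.
rewrite -sorted_pairwise; last by move=> ? ? ?; apply: ltn_trans.
by have := iota_ltn_sorted 0 m; rewrite -val_enum_ord sorted_map.
Qed.

Section StrictUpper.
Variables (R : pzRingType) (m : nat) (f : 'I_m -> 'I_m -> R).

Definition strict_upper : 'M[R]_m :=
  \matrix_(k, l) if (k < l)%N then f k l else 0.

Local Notation U := strict_upper.

Lemma strict_upper_expr_eq0 v (i j : 'I_m) : (j < i + v)%N -> (U ^+ v) i j = 0.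
Proof.
elim: v i => [|v IH] i ji.
  by rewrite addn0 in ji; rewrite expr0 mxE -val_eqE gtn_eqF.
rewrite exprS -mulmxE mxE big1 // => k _; rewrite mxE.
by case: ltnP => ik; rewrite ?mul0r // IH ?mulr0 //; lia.
Qed.

Lemma strict_upper_exprn : U ^+ m = 0.
Proof. by apply/matrixP => i j; rewrite strict_upper_expr_eq0 ?mxE // ltn_addl. Qed.

Lemma mul_1B_sum_strict_upper_expr : (1 - U) * \sum_(v < m) U ^+ v = 1.
Proof. by apply/eqP; rewrite -opprB mulNr eqr_oppLR -subrX1 strict_upper_exprn sub0r. Qed.

Lemma sum_chain_prod_strict_upper (x0 : 'I_m) v (i j : 'I_m) :
  \sum_(t : v.+1.-tuple 'I_m | is_chain i j t)
     \prod_(0 <= s < v) f (nth x0 t s) (nth x0 t s.+1) = (U ^+ v) i j.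
Proof.
elim: v i => [|v IH] i.
  pose ti : 1.-tuple 'I_m := [tuple i].
  have chain1 (t : 1.-tuple 'I_m) : is_chain i j t = (t == ti) && (i == j).
    case: t => -[|x []] // t1.
    rewrite /is_chain -[Tuple t1 == _]val_eqE /= eqseq_cons andbT.
    by case: eqP => [->|].
  rewrite expr0 mxE; under eq_bigr => t _ do rewrite big_geq //.
  under eq_bigl => t do rewrite chain1.
  case: (eqVneq i j) => _.
    by rewrite (big_pred1 ti) // => t; rewrite andbT.
  by rewrite big_pred0 ?mulr0n // => t; rewrite andbF.
rewrite big_tuple_cons (bigD1 i) //= [X in _ + X]big1 ?addr0 => [|x xi]; last first.
  by rewrite big_pred0 // => t; rewrite is_chain_thead theadE eq_sym (negbTE xi).
rewrite exprS -mulmxE mxE.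
under [RHS]eq_bigr => k _ do rewrite -IH mulr_sumr big_mkcond.
rewrite exchange_big big_mkcond; apply: eq_bigr => t _.
rewrite -big_mkcond (eq_bigl _ _ (fun k => is_chain_thead k j t)) /=.
rewrite is_chain_cons big_nat_recl //=.
case: (is_chain (thead t) j t); last by rewrite andbF big_pred0 // => k; rewrite andbF.
rewrite andbT (big_pred1 (thead t)) => [|k]; last by rewrite andbT.
by rewrite mxE /thead (tnth_nth x0); case: ifP; rewrite ?mul0r.
Qed.

Lemma colpart_strict_upper_mul0 (x y : 'I_m) :
  (x <= y)%N -> colpart U y * colpart U x = 0.
Proof.
move=> xy; apply/matrixP => k l; rewrite -mulmxE !mxE big1 // => p _; rewrite !mxE.
have [->|_] := eqVneq p y; last by rewrite mul0r.
by case: eqP => [->|_]; rewrite ?mulr0 // (ltnNge y x) xy mulr0.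
Qed.

End StrictUpper.

Lemma prod_nat_opp_mul (R : comPzRingType) n (a b : nat -> R) :
  \prod_(0 <= s < n) (- a s * b s) =
  (-1) ^+ n * \prod_(0 <= s < n) a s * \prod_(0 <= s < n) b s.
Proof. by rewrite big_split /= !big_mkord prodrN card_ord. Qed.

Section OmegaFactorization.
Variables (R : realType) (m n : nat) (A : 'M[R]_(m, n)) (mu : 'I_m -> R).

Definition Nmat : 'M[R]_m := strict_upper (fun k l => - mu l * hcoef A k l).

Lemma dcoef_expr (i j : 'I_m) :
  dcoef A mu i j = \sum_(1 <= v < (j - i).+1) (Nmat ^+ v) i j.
Proof.
rewrite /dcoef big_add1 /=; apply: eq_big_nat => v _.
rewrite -(sum_chain_prod_strict_upper _ i); apply: eq_bigr => t _.
by rewrite prod_nat_opp_mul.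
Qed.

Lemma dcoef_eq0 (i j : 'I_m) : (j <= i)%N -> dcoef A mu i j = 0.
Proof. by move=> ji; rewrite /dcoef big_geq //; lia. Qed.

Lemma Omega_entry (i j : 'I_m) : Omega A mu i j = (i == j)%:R + dcoef A mu i j.
Proof.
rewrite mxE; have [<-|ij] := eqVneq i j; first by rewrite dcoef_eq0 ?addr0.
by case: ltnP => [_|/dcoef_eq0 ->]; rewrite add0r.
Qed.

Lemma Omega_sum_expr : Omega A mu = \sum_(v < m) Nmat ^+ v.
Proof.
apply/matrixP => i j; rewrite summxE -(big_mkord predT (fun v => (Nmat ^+ v) i j)).
rewrite (big_cat_nat _ (n := (j - i).+1)) //=; last first.
  exact: leq_ltn_trans (leq_subr i j) (ltn_ord j).
rewrite [X in _ + X]big1_seq ?addr0 => [|v]; last first.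
  move=> /andP[_]; rewrite mem_index_iota => /andP[iv _].
  by rewrite strict_upper_expr_eq0 //; lia.
by rewrite Omega_entry dcoef_expr big_ltn // expr0 mxE.
Qed.

Lemma oprodE (s : seq 'I_m) (M : 'I_m -> 'M[R]_m) : oprod s M = \prod_(x <- s) M x.
Proof. by elim: s => [|x s IH]; rewrite ?big_nil // big_cons -IH /= mulmxE. Qed.

Lemma Hmat_colpart (x : 'I_m) : Hmat A mu x = 1 + colpart Nmat x.
Proof.
pose c j := - mu x * hcoef A j x.
have -> : Hmat A mu x =
    \prod_(j <- [seq j : 'I_m <- enum 'I_m | (j < x)%N]) (1 + c j *: delta_mx j x).
  rewrite /Hmat oprodE; case: ifP => [/eqP x0|_]; last by [].
  by rewrite big_filter big_pred0 // => j; rewrite x0 ltn0.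
rewrite prod_1D_pairwise_mul0; last first.
  apply: (sub_in_pairwise (P := fun j : 'I_m => (j < x)%N)
                          (r := fun i j : 'I_m => (i < j)%N)).
  - move=> j k _ kx _; rewrite -mulmxE -scalemxAl -scalemxAr mul_delta_mx_0 ?scaler0 //.
    by rewrite -val_eqE gtn_eqF.
  - by apply/allP => j; rewrite mem_filter => /andP[].
  - exact: pairwise_filter (pairwise_ltn_enum_ord m).
congr (_ + _); apply/matrixP => k l; rewrite summxE big_filter big_enum_cond /= !mxE.
under eq_bigr => j _ do rewrite !mxE.
have [->|_] := eqVneq l x; last by rewrite big1 // => j _; rewrite andbF mulr0.
rewrite big_mkcond (bigD1 k) //= big1 => [|j jk]; first by rewrite eqxx mulr1 addr0.
by rewrite eq_sym (negbTE jk) mulr0; case: ifP.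
Qed.

End OmegaFactorization.

Theorem theorem3p9 (R : realType) (m n : nat) (A : 'M[R]_(m, n)) (mu : 'I_m -> R)
  (hA : forall k : 'I_m, row k A != 0) :
  Omega A mu = oprod (enum 'I_m) (Hmat A mu).
Proof.
set N := Nmat A mu.
have -> : oprod (enum 'I_m) (Hmat A mu) = \prod_(x <- enum 'I_m) (1 + colpart N x).
  by rewrite oprodE; apply: eq_bigr => x _; rewrite Hmat_colpart.
have left_inv : \prod_(x <- enum 'I_m) (1 + colpart N x) * (1 - N) = 1.
  rewrite -{2}(sum_colpart N) -big_enum prod_1D_mul_1B_sum //.
    apply: sub_pairwise (pairwise_ltn_enum_ord m) => x y xy.
    by rewrite colpart_strict_upper_mul0 // ltnW.
  by apply/allP => x _; rewrite colpart_strict_upper_mul0.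
have right_inv : (1 - N) * Omega A mu = 1.
  by rewrite Omega_sum_expr mul_1B_sum_strict_upper_expr.
by rewrite -[LHS]mul1r -{1}left_inv -mulrA right_inv mulr1.
Qed.
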